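(* Let $\nu\in\mathbb{N}$, let $(X,d)$ be a $\nu$-generalized metric space, and let $\{x_n\}_{n\in\mathbb{N}}$ be a sequence in $X$ whose terms $x_n$ $(n\in\mathbb{N})$ are pairwise distinct. Suppose that for every $\epsilon>0$ and for any two subsequences $\{x_{p_i}\}$ and $\{x_{q_i}\}$ of $\{x_n\}$, if $\limsup_{i\to\infty} d(x_{p_i},x_{q_i})\le\epsilon$, then there is $N$ such that $d(x_{p_i+1},x_{q_i+1})\le\epsilon$ for all $i\ge N$. If $d(x_n,x_{n+1})\to0$ as $n\to\infty$, then $\{x_n\}$ is $\nu$-Cauchy.
   Context: Let $X$ be a nonempty set, $d:X\times X\to[0,\infty)$, and $\nu\in\mathbb{N}$. $(X,d)$ is a $\nu$-generalized metric space if: (1) $d(x,y)=0$ iff $x=y$; (2) $d(x,y)=d(y,x)$ for all $x,y$; (3) $d(x,y)\le d(x,u_1)+d(u_1,u_2)+\dots+d(u_\nu,y)$ for every set $\{x,u_1,\dots,u_\nu,y\}$ of $\nu+2$ pairwise distinct elements of $X$. For $k\in\mathbb{N}$, a sequence $\{x_n\}$ in $X$ is $k$-Cauchy if $\lim_{n\to\infty}\sup\{d(x_n,x_{n+1+mk}): m\in\mathbb{Z}^+\}=0$, where $\mathbb{Z}^+$ denotes the nonnegative integers. A subsequence $\{x_{p_i}\}$ means $p_1<p_2<\cdots$ in $\mathbb{N}$. *)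

From Stdlib Require Import Reals.
Open Scope R_scope.

Definition gen_metric {X : Type} (nu : nat) (d : X -> X -> R) : Prop :=
  (forall x y, 0 <= d x y) /\
  (forall x y, d x y = 0 <-> x = y) /\
  (forall x y, d x y = d y x) /\
  (forall p : nat -> X,
      (forall i j, (i <= S nu)%nat -> (j <= S nu)%nat -> p i = p j -> i = j) ->
      d (p 0%nat) (p (S nu)) <= sum_f_R0 (fun i => d (p i) (p (S i))) nu).

(* k-Cauchy: lim_{n} sup { d(x_n, x_{n+1+mk}) : m >= 0 } = 0.
   The sups are finite from some index N on, and they tend to 0. *)
Definition k_cauchy {X : Type} (d : X -> X -> R) (k : nat) (x : nat -> X) : Prop :=
  exists (N : nat) (s : nat -> R),
    (forall n, (N <= n)%nat ->
       is_lub (fun r => exists m : nat, r = d (x n) (x (n + 1 + m * k)%nat)) (s n)) /\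
    Un_cv s 0.

Definition limsup_le (u : nat -> R) (l : R) : Prop :=
  forall delta, 0 < delta -> exists N : nat, forall i, (N <= i)%nat -> u i <= l + delta.

Definition strict_incr (p : nat -> nat) : Prop := forall i, (p i < p (S i))%nat.

(* Suppose the conclusion fails for some eps.  Then there are arbitrarily late
   indices n with a "bad" jump d(x_n, x_{n+1+m nu}) > eps; take m minimal.  As
   consecutive distances tend to 0, m >= 1, and minimality gives
   d(x_n, x_{n+1+(m-1) nu}) <= eps.  Detouring from x_{n-1} through x_n and
   x_{n+1+(m-1) nu}, then along nu-1 consecutive steps, the generalized triangle
   inequality (nu+2 distinct points) bounds d(x_{n-1}, x_{n+m nu}) by
   eps + o(1).  Along a sequence of such bad indices the hypothesis on
   subsequences therefore forces d(x_n, x_{n+1+m nu}) <= eps eventually, which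
   contradicts the choice of the bad jumps. *)
From Stdlib Require Import Reals.
From Stdlib Require Import Lra Lia Wf_nat Classical ClassicalEpsilon.
Open Scope R_scope.

Lemma sum_f_R0_shift (g : nat -> R) (n : nat) :
  sum_f_R0 g (S n) = g 0%nat + sum_f_R0 (fun k => g (S k)) n.
Proof.
  induction n as [|n IH].
  - simpl; ring.
  - change (sum_f_R0 g (S (S n))) with (sum_f_R0 g (S n) + g (S (S n))).
    rewrite IH; simpl; ring.
Qed.

Lemma sum_f_R0_le_shift (g : nat -> R) (n : nat) :
  (forall k, 0 <= g k) -> sum_f_R0 g n <= g 0%nat + sum_f_R0 (fun k => g (S k)) n.
Proof.
  intros g_ge0. rewrite <- sum_f_R0_shift; simpl. specialize (g_ge0 (S n)). lra.
Qed.

Lemma Un_cv_0_eventually_le (u : nat -> R) (delta : R) :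
  Un_cv u 0 -> 0 < delta -> exists K, forall n, (K <= n)%nat -> u n <= delta.
Proof.
  intros u_cv delta_gt0. destruct (u_cv delta delta_gt0) as [K HK].
  exists K. intros n Hn. specialize (HK n Hn). unfold R_dist in HK.
  pose proof (Rle_abs (u n - 0)). lra.
Qed.

Lemma strict_incr_ge (p : nat -> nat) (i : nat) : strict_incr p -> (p 0%nat + i <= p i)%nat.
Proof. intros p_incr. induction i as [|i IH]; [lia|]. specialize (p_incr i). lia. Qed.

Lemma nat_least_witness (P : nat -> Prop) :
  (exists m, P m) -> exists m, P m /\ forall k, (k < m)%nat -> ~ P k.
Proof.
  intros HP.
  destruct (dec_inh_nat_subset_has_unique_least_element P (fun n => classic (P n)) HP)
    as [m [[Pm m_least] _]].
  exists m. split; [exact Pm|]. intros k Hk Pk. specialize (m_least k Pk). lia.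
Qed.

Lemma spaced_witnesses {A : Type} (R : A -> Prop) (lo hi : A -> nat) (N0 : nat) :
  (forall N, exists a, (N <= lo a)%nat /\ R a) ->
  exists s : nat -> A, forall i,
    R (s i) /\ (N0 <= lo (s i))%nat /\ (hi (s i) < lo (s (S i)))%nat.
Proof.
  intros Hwit. destruct (choice _ Hwit) as [G HG].
  assert (HG' : forall N, R (G (Nat.max N0 N)) /\ (N0 <= lo (G (Nat.max N0 N)))%nat
                          /\ (N <= lo (G (Nat.max N0 N)))%nat).
  { intros N. destruct (HG (Nat.max N0 N)) as [H1 H2]. repeat split; auto; lia. }
  set (s := fix s i := match i with
                       | O => G (Nat.max N0 0)
                       | S i => G (Nat.max N0 (S (hi (s i))))
                       end).
  assert (s_form : forall i, exists N, s i = G (Nat.max N0 N))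
    by (intros [|i]; eexists; reflexivity).
  exists s. intros i. destruct (s_form i) as [N Hi].
  destruct (HG' N) as [H1 [H2 _]]. rewrite Hi. repeat split; auto.
  destruct (HG' (S (hi (s i)))) as [_ [_ H3]]. rewrite <- Hi. exact H3.
Qed.

Lemma k_cauchy_of_uniform_bound (X : Type) (d : X -> X -> R) (k : nat) (x : nat -> X) :
  (forall a b, 0 <= d a b) ->
  (forall eps, 0 < eps -> exists N, forall n m, (N <= n)%nat ->
     d (x n) (x (n + 1 + m * k)%nat) <= eps) ->
  k_cauchy d k x.
Proof.
  intros d_ge0 Hunif.
  set (D n := fun r => exists m : nat, r = d (x n) (x (n + 1 + m * k)%nat)).
  destruct (Hunif 1 Rlt_0_1) as [N0 HN0].
  assert (Hlub : forall n, exists s, (N0 <= n)%nat -> is_lub (D n) s).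
  { intro n. destruct (Compare_dec.le_lt_dec N0 n) as [Hn|Hn].
    - destruct (completeness (D n)) as [s Hs].
      + exists 1. intros r [m ->]. now apply HN0.
      + exists (d (x n) (x (n + 1 + 0 * k)%nat)), 0%nat. reflexivity.
      + now exists s.
    - exists 0. lia. }
  destruct (choice _ Hlub) as [s Hs].
  exists N0, s. split; [exact Hs|].
  intros eps eps_gt0. destruct (Hunif (eps / 2) ltac:(lra)) as [N2 HN2].
  exists (Nat.max N0 N2). intros n Hn. unfold R_dist.
  destruct (Hs n ltac:(lia)) as [s_ub s_least].
  assert (s_le : s n <= eps / 2).
  { apply s_least. intros r [m ->]. apply HN2. lia. }
  assert (s_ge0 : 0 <= s n).
  { apply Rle_trans with (d (x n) (x (n + 1 + 0 * k)%nat)); [apply d_ge0|].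
    apply s_ub. now exists 0%nat. }
  rewrite Rminus_0_r, Rabs_pos_eq; lra.
Qed.

Section DetourArgument.

Variables (X : Type) (nu : nat) (d : X -> X -> R) (x : nat -> X).
Hypothesis d_gen : gen_metric (S nu) d.
Hypothesis x_inj : forall n m, x n = x m -> n = m.

(* [nu] is the paper's nu minus one; a jump of [m] blocks goes from [x n] to
   [x (n + 1 + m * S nu)]. *)
Definition least_long_jump (eps : R) (n m : nat) : Prop :=
  eps < d (x n) (x (n + 1 + m * S nu)%nat) /\
  forall k, (k < m)%nat -> ~ eps < d (x n) (x (n + 1 + k * S nu)%nat).

Lemma gen_metric_detour_le (a b c : nat) (delta : R) :
  a <> b -> (a < c)%nat -> (b < c)%nat ->
  (forall k, (c <= k)%nat -> d (x k) (x (S k)) <= delta) ->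
  d (x a) (x (c + nu)%nat) <= d (x a) (x b) + d (x b) (x c) + INR (S nu) * delta.
Proof.
  intros ab ac bc Hstep.
  destruct d_gen as [d_ge0 [_ [_ d_tri]]].
  set (idx j := match j with O => a | 1%nat => b | S (S k) => (c + k)%nat end).
  assert (idx_inj : forall i j, (i <= S (S nu))%nat -> (j <= S (S nu))%nat ->
                      x (idx i) = x (idx j) -> i = j).
  { intros i j _ _ Hij. apply x_inj in Hij.
    destruct i as [|[|i]], j as [|[|j]]; simpl in Hij; lia. }
  pose proof (d_tri (fun j => x (idx j)) idx_inj) as Htri.
  rewrite sum_f_R0_shift in Htri; simpl in Htri.
  assert (Hchain : sum_f_R0 (fun k => d (x (c + k)%nat) (x (c + S k)%nat)) nu
                   <= INR (S nu) * delta).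
  { rewrite <- (Rmult_comm delta), <- sum_cte. apply sum_Rle. intros k _.
    rewrite Nat.add_succ_r. apply Hstep. lia. }
  pose proof (sum_f_R0_le_shift (fun k => d (x (idx (S k))) (x (idx (S (S k))))) nu
                (fun _ => d_ge0 _ _)) as Hshift; simpl in Hshift.
  replace (c + 0)%nat with c in * by lia.
  lra.
Qed.

Lemma minimal_jump_detour_le (eps delta : R) (n m : nat) :
  (1 <= n)%nat ->
  least_long_jump eps n (S m) ->
  (forall k, (pred n <= k)%nat -> d (x k) (x (S k)) <= delta) ->
  d (x (pred n)) (x (n + S m * S nu)%nat) <= eps + INR (S (S nu)) * delta.
Proof.
  intros n_ge1 [_ m_least] Hstep.
  assert (Hfirst : d (x (pred n)) (x n) <= delta).
  { replace n with (S (pred n)) at 2 by lia. apply Hstep. lia. }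
  assert (Hjump : d (x n) (x (n + 1 + m * S nu)%nat) <= eps).
  { apply Rnot_lt_le, m_least. lia. }
  replace (n + S m * S nu)%nat with (n + 1 + m * S nu + nu)%nat by lia.
  eapply Rle_trans.
  { apply (gen_metric_detour_le (pred n) n (n + 1 + m * S nu) delta); try lia.
    intros k Hk. apply Hstep. lia. }
  rewrite (S_INR (S nu)). lra.
Qed.

Lemma least_long_jumps_unbounded (eps : R) :
  ~ (exists N, forall n m, (N <= n)%nat -> d (x n) (x (n + 1 + m * S nu)%nat) <= eps) ->
  forall N, exists nm, (N <= fst nm)%nat /\ least_long_jump eps (fst nm) (snd nm).
Proof.
  intros Hbad N. apply NNPP; intros Hnone. apply Hbad. exists N. intros n m Hn.
  apply Rnot_lt_le; intros Hfar.
  destruct (nat_least_witness (fun k => eps < d (x n) (x (n + 1 + k * S nu)%nat))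
              (ex_intro _ m Hfar)) as [m0 Hm0].
  apply Hnone. now exists (n, m0).
Qed.

Hypothesis steps_cv : Un_cv (fun n => d (x n) (x (S n))) 0.
Hypothesis subseq_step :
  forall (eps : R) (p q : nat -> nat), 0 < eps ->
    strict_incr p -> strict_incr q ->
    limsup_le (fun i => d (x (p i)) (x (q i))) eps ->
    exists N : nat, forall i, (N <= i)%nat -> d (x (S (p i))) (x (S (q i))) <= eps.

Lemma block_jumps_eventually_le (eps : R) :
  0 < eps -> exists N, forall n m, (N <= n)%nat ->
    d (x n) (x (n + 1 + m * S nu)%nat) <= eps.
Proof.
  intros eps_gt0. apply NNPP; intros Hbad.
  destruct (Un_cv_0_eventually_le _ eps steps_cv eps_gt0) as [K HK].
  destruct (spaced_witnesses (fun nm => least_long_jump eps (fst nm) (snd nm)) fst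
                (fun nm => fst nm + 1 + snd nm * S nu)%nat (S K)
                (least_long_jumps_unbounded eps Hbad))
    as [s Hs].
  set (P i := fst (s i)). set (M i := snd (s i)).
  assert (P_incr : strict_incr P).
  { intros i. destruct (Hs i) as [_ [_ H]]. unfold P. lia. }
  assert (P_ge : forall i, (S K + i <= P i)%nat).
  { intros i. pose proof (strict_incr_ge P i P_incr). destruct (Hs 0%nat) as [_ [H0 _]].
    unfold P in *. lia. }
  assert (Hfar : forall i, eps < d (x (P i)) (x (P i + 1 + M i * S nu)%nat))
    by (intros i; apply (Hs i)).
  assert (M_pos : forall i, (1 <= M i)%nat).
  { intros i. destruct (M i) eqn:EM; [|lia]. exfalso.
    specialize (Hfar i). rewrite EM, Nat.add_0_r, Nat.add_1_r in Hfar.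
    specialize (HK (P i) ltac:(specialize (P_ge i); lia)). lra. }
  destruct (subseq_step eps (fun i => pred (P i)) (fun i => P i + M i * S nu)%nat eps_gt0)
    as [N HN].
  - intros i. specialize (P_incr i). specialize (P_ge i). lia.
  - intros i. destruct (Hs i) as [_ [_ H]]. specialize (P_ge (S i)). unfold P, M in *. nia.
  - intros delta delta_gt0.
    assert (scale_gt0 : 0 < INR (S (S nu))) by apply lt_0_INR, Nat.lt_0_succ.
    destruct (Un_cv_0_eventually_le _ (delta / INR (S (S nu))) steps_cv
                (Rdiv_lt_0_compat _ _ delta_gt0 scale_gt0)) as [K' HK'].
    exists K'. intros i Hi. specialize (P_ge i).
    destruct (M i) as [|m] eqn:EM; [specialize (M_pos i); lia|].
    replace delta with (INR (S (S nu)) * (delta / INR (S (S nu)))) by (field; lra).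
    apply minimal_jump_detour_le; [lia| |intros k Hk; apply HK'; lia].
    rewrite <- EM. apply (Hs i).
  - specialize (HN N (le_n N)). specialize (Hfar N). specialize (P_ge N).
    replace (S (pred (P N))) with (P N) in HN by lia.
    replace (S (P N + M N * S nu)) with (P N + 1 + M N * S nu)%nat in HN by lia.
    lra.
Qed.

End DetourArgument.

Theorem lemma2p1 (X : Type) (nu : nat) (d : X -> X -> R) (x : nat -> X) :
  (1 <= nu)%nat ->
  gen_metric nu d ->
  (forall n m : nat, x n = x m -> n = m) ->
  (forall (eps : R) (p q : nat -> nat), 0 < eps ->
     strict_incr p -> strict_incr q ->
     limsup_le (fun i => d (x (p i)) (x (q i))) eps ->
     exists N : nat, forall i, (N <= i)%nat ->
       d (x (S (p i))) (x (S (q i))) <= eps) ->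
  Un_cv (fun n => d (x n) (x (S n))) 0 ->
  k_cauchy d nu x.
Proof.
  intros nu_ge1 d_gen x_inj subseq_step steps_cv.
  destruct nu as [|nu]; [lia|].
  apply k_cauchy_of_uniform_bound; [apply d_gen|].
  intros eps eps_gt0.
  exact (block_jumps_eventually_le X nu d x d_gen x_inj steps_cv subseq_step eps eps_gt0).
Qed.
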